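(* Let $d$ be an integer and let $G$ be a finite connected $d$-regular simple graph containing no cycle of length $3$ and no cycle of length $5$ as a subgraph. If $\kappa_{LLY}(x,y)>0$ for every edge $xy$ of $G$, then $\kappa_{LLY}(x,y)=2/d$ for every edge $xy$ of $G$.
   Context: For vertices $u,v$ of a connected graph $G$, $d(u,v)$ is the graph distance, $N(v)$ is the neighborhood of $v$, $d_v=|N(v)|$. For $0\le\alpha<1$, the $\alpha$-lazy random walk is $m_x^\alpha(x)=\alpha$, $m_x^\alpha(v)=(1-\alpha)/d_x$ for $v\in N(x)$, $m_x^\alpha(v)=0$ otherwise. The transportation distance between probability distributions $m_1,m_2$ on $V(G)$ is $W(m_1,m_2)=\inf_A\sum_{x,y}A(x,y)d(x,y)$ over couplings $A:V\times V\to[0,1]$ with $\sum_yA(x,y)=m_1(x)$, $\sum_xA(x,y)=m_2(y)$. For distinct $x,y$, $\kappa_\alpha(x,y)=1-W(m_x^\alpha,m_y^\alpha)/d(x,y)$ and $\kappa_{LLY}(x,y)=\lim_{\alpha\to1}\kappa_\alpha(x,y)/(1-\alpha)$. *)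

From HB Require Import structures.
From mathcomp Require Import all_boot all_order all_algebra.
From mathcomp Require Import all_classical all_reals all_analysis.
Set Implicit Arguments. Unset Strict Implicit. Unset Printing Implicit Defensive.
Import Order.TTheory GRing.Theory Num.Theory numFieldNormedType.Exports.
Local Open Scope classical_set_scope.
Local Open Scope ring_scope.

Definition simple_graph (T : finType) (adj : rel T) : Prop :=
  (forall x y, adj x y = adj y x) /\ (forall x, ~~ adj x x).

Definition connected_graph (T : finType) (adj : rel T) : Prop :=
  forall x y : T, connect adj x y.

Definition nbhd (T : finType) (adj : rel T) (x : T) : {set T} :=
  [set y | adj x y].

Definition deg (T : finType) (adj : rel T) (x : T) : nat := #|nbhd adj x|.

Definition regular (T : finType) (adj : rel T) (d : nat) : Prop :=
  forall x : T, deg adj x = d.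

Definition has_C3 (T : finType) (adj : rel T) : Prop :=
  exists v0 v1 v2 : T, [/\ uniq [:: v0; v1; v2],
    adj v0 v1, adj v1 v2 & adj v2 v0].

Definition has_C5 (T : finType) (adj : rel T) : Prop :=
  exists v0 v1 v2 v3 v4 : T, uniq [:: v0; v1; v2; v3; v4] /\
    [/\ adj v0 v1, adj v1 v2, adj v2 v3, adj v3 v4 & adj v4 v0].

Fixpoint reach (T : finType) (adj : rel T) (n : nat) (x y : T) : bool :=
  match n with
  | 0 => x == y
  | n'.+1 => reach adj n' x y || [exists z, reach adj n' x z && adj z y]
  end.

(* graph distance: least n with a walk of length n from x to y
   (in a connected graph such an n < #|T| exists, so this is exact) *)
Definition gdist (T : finType) (adj : rel T) (x y : T) : nat :=
  find (fun n => reach adj n x y) (iota 0 #|T|).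

Definition lazy_walk (R : realType) (T : finType) (adj : rel T)
    (alpha : R) (x : T) (v : T) : R :=
  if v == x then alpha
  else if adj x v then (1 - alpha) / (deg adj x)%:R else 0.

Definition coupling (R : realType) (T : finType) (m1 m2 : T -> R)
    (A : T -> T -> R) : Prop :=
  [/\ forall x y, 0 <= A x y <= 1,
      forall x, \sum_(y : T) A x y = m1 x &
      forall y, \sum_(x : T) A x y = m2 y].

Definition transport (R : realType) (T : finType) (adj : rel T)
    (m1 m2 : T -> R) : R :=
  inf [set c : R | exists A : T -> T -> R, coupling m1 m2 A /\
       c = \sum_(x : T) \sum_(y : T) A x y * (gdist adj x y)%:R].

Definition kappa (R : realType) (T : finType) (adj : rel T)
    (alpha : R) (x y : T) : R :=
  1 - transport adj (lazy_walk adj alpha x) (lazy_walk adj alpha y)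
      / (gdist adj x y)%:R.

Definition kappaLLY (R : realType) (T : finType) (adj : rel T) (x y : T) : R :=
  let f : R -> R := fun alpha => kappa adj alpha x y / (1 - alpha) in
  lim (f @ at_left (1 : R)).

(* Fix an edge xy, put X = N(x) \ {y}, Y = N(y) \ {x} and p = (1 - alpha) / d.
   Without triangles, X, Y and {x, y} are disjoint; without 5-cycles, a vertex
   of X and a non-adjacent vertex of Y are at distance 3.  If Hall's condition
   from X to Y fails at some S, the potentials 1_x + 2 1_S on the support of
   m_x and 1_x + 1_N(S) - 1_(Y \ N(S)) on that of m_y are dual feasible and
   give W(m_x, m_y) >= 1, so kappa_alpha <= 0 and kappa_LLY <= 0.  Otherwise a
   perfect matching X -> Y yields a plan of cost alpha + p (d - 2), which the
   same potentials with S empty show to be optimal: kappa_alpha = 2 (1 - alpha) / d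
   for alpha close to 1, whence kappa_LLY = 2 / d. *)

From HB Require Import structures.
From mathcomp Require Import all_boot all_order all_algebra.
From mathcomp Require Import all_classical all_reals all_analysis.
From mathcomp Require Import lra ring.
(* Let the finset lemmas (subsetP, setP, ...) shadow their classical_sets homonyms. *)
From mathcomp Require Import fintype finset.
Import Order.TTheory GRing.Theory Num.Theory numFieldNormedType.Exports.
Set Implicit Arguments. Unset Strict Implicit. Unset Printing Implicit Defensive.

Section Hall.
Variables (T : finType) (r : rel T).
Implicit Types (A B P S X Y : {set T}) (s : T -> T).

Definition nbhd_in (Y S : {set T}) : {set T} := [set v in Y | [exists u in S, r u v]].

Definition matching (X Y : {set T}) (s : T -> T) : Prop :=
  {in X &, injective s} /\ {in X, forall u, s u \in Y /\ r u (s u)}.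

Definition hall_condition (X Y : {set T}) : Prop :=
  forall S : {set T}, S \subset X -> #|S| <= #|nbhd_in Y S|.

Lemma nbhd_in_sub Y S : nbhd_in Y S \subset Y.
Proof. by apply/subsetP => v /setIdP[]. Qed.

Lemma nbhd_in0 Y : nbhd_in Y set0 = set0.
Proof.
by apply/setP => v; rewrite inE in_set0 andbC; case: existsP => // -[u]; rewrite in_set0.
Qed.

Lemma mem_nbhd_in Y S u v : u \in S -> v \in Y -> r u v -> v \in nbhd_in Y S.
Proof. by move=> uS vY ruv; rewrite inE vY; apply/existsP; exists u; rewrite uS. Qed.

Lemma hall_conditionS X X' Y : X' \subset X -> hall_condition X Y -> hall_condition X' Y.
Proof. by move=> sX' hall S sS; apply/hall/(subset_trans sS). Qed.

Lemma matching_nbhd_in X Y s : matching X Y s -> matching X (nbhd_in Y X) s.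
Proof.
case=> inj_s ms; split=> // u uX; have [sY rus] := ms u uX.
by split=> //; apply: mem_nbhd_in uX sY rus.
Qed.

Lemma matching_imset X Y s : matching X Y s -> #|Y| <= #|X| -> s @: X = Y.
Proof.
case=> inj_s ms YX; apply/eqP; rewrite eqEcard card_in_imset // YX andbT.
by apply/subsetP => _ /imsetP[u uX ->]; case: (ms u uX).
Qed.

Lemma matching_glue A B P Y s1 s2 : P \subset Y ->
  matching A P s1 -> matching B (Y :\: P) s2 ->
  matching (A :|: B) Y (fun u => if u \in A then s1 u else s2 u).
Proof.
move=> PY [inj1 m1] [inj2 m2].
have inB u : u \in A :|: B -> u \notin A -> u \in B by rewrite inE => /orP[->|].
split=> [u w uAB wAB|u uAB] /=.
  case: ifPn => uA; case: ifPn => wA; first exact: inj1.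
  - move=> e; have [] := m2 w (inB w wAB wA).
    by rewrite -e inE (m1 u uA).1.
  - move=> e; have [] := m2 u (inB u uAB uA).
    by rewrite e inE (m1 w wA).1.
  - by apply: inj2; apply: inB.
case: ifPn => uA; first by have [/(subsetP PY)] := m1 u uA.
by have [/setDP[]] := m2 u (inB u uAB uA).
Qed.

Lemma hall_tight X Y S : hall_condition X Y -> S \subset X ->
  #|nbhd_in Y S| <= #|S| -> hall_condition (X :\: S) (Y :\: nbhd_in Y S).
Proof.
move=> hall SX tight S' /subsetDP[S'X /disjoint_setI0 S'S0].
have nbhdU : nbhd_in Y (S' :|: S) \subset nbhd_in (Y :\: nbhd_in Y S) S' :|: nbhd_in Y S.
  apply/subsetP => v /setIdP[vY /existsP[u /andP[uS'S ruv]]].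
  rewrite in_setU orbC; have [//|vNS] /= := boolP (v \in nbhd_in Y S).
  case/setUP: uS'S => [uS'|uS]; last by rewrite (mem_nbhd_in uS vY ruv) in vNS.
  by apply: mem_nbhd_in uS' _ ruv; rewrite inE vNS.
have S'SX : S' :|: S \subset X by rewrite subUset S'X SX.
have cardU : #|S' :|: S| = #|S'| + #|S| by rewrite cardsU S'S0 cards0 subn0.
rewrite -(leq_add2r #|S|) -cardU.
apply: leq_trans (hall _ S'SX) _; apply: leq_trans (subset_leq_card nbhdU) _.
exact: leq_trans (leq_card_setU _ _) (leq_add (leqnn _) tight).
Qed.

Lemma hall_loose X Y u v : hall_condition X Y -> u \in X ->
  (forall S, S \subset X -> S != set0 -> S != X -> #|S| < #|nbhd_in Y S|) ->
  hall_condition (X :\ u) (Y :\ v).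
Proof.
move=> hall uX loose S /subsetD1P[SX uS].
have [->|S0] := eqVneq S set0; first by rewrite cards0.
have SnX : S != X by apply: contraNneq uS => ->.
have nbhdD1 : nbhd_in Y S :\ v \subset nbhd_in (Y :\ v) S.
  apply/subsetP => w /setD1P[wv /setIdP[wY rSw]].
  by rewrite inE in_setD1 wv wY.
apply: leq_trans (subset_leq_card nbhdD1).
rewrite -ltnS; apply: leq_trans (loose S SX S0 SnX) _.
by rewrite (cardsD1 v (nbhd_in Y S)); case: (v \in _).
Qed.

Theorem hall_marriage X Y : hall_condition X Y -> exists s, matching X Y s.
Proof.
have [n] := ubnP #|X|; elim: n X Y => // n IH X Y ltXn hall.
have [/existsP[S /and4P[SX S0 SnX tight]]|/existsPn loose] := boolP [exists S : {set T},
    [&& S \subset X, S != set0, S != X & #|nbhd_in Y S| <= #|S|]].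
  have ltSX : #|S| < #|X| by apply: proper_card; rewrite properEneq SnX.
  have ltDX : #|X :\: S| < #|X|.
    by rewrite cardsDS // ltn_subrL card_gt0 S0 (leq_ltn_trans _ ltSX).
  have [s1 m1] := IH S Y (leq_trans ltSX ltXn) (hall_conditionS SX hall).
  have [s2 m2] := IH _ _ (leq_trans ltDX ltXn) (hall_tight hall SX tight).
  exists (fun u => if u \in S then s1 u else s2 u).
  rewrite -(setID X S) (setIidPr SX).
  exact: matching_glue (nbhd_in_sub Y S) (matching_nbhd_in m1) m2.
have [->|[u uX]] := set_0Vmem X; first by exists id; split=> u; rewrite inE.
have [v /setIdP[vY /existsP[u' /andP[/set1P-> ruv]]]] : exists v, v \in nbhd_in Y [set u].
  by apply/card_gt0P; apply: leq_trans (hall _ _); rewrite ?cards1 ?sub1set.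
have [s m] : exists s, matching (X :\ u) (Y :\ v) s.
  apply: IH; first by move: ltXn; rewrite (cardsD1 u X) uX add1n ltnS.
  apply: hall_loose hall uX _ => S SX S0 SnX.
  by move: (loose S); rewrite SX S0 SnX -ltnNge.
exists (fun w => if w \in [set u] then v else s w).
rewrite -(setD1K uX); apply: (matching_glue _ _ m); first by rewrite sub1set.
by split=> [w1 w2 /set1P-> /set1P->|w /set1P->]; rewrite ?inE.
Qed.

End Hall.

Section Distance.
Variables (T : finType) (adj : rel T).

Lemma reach_mono m n a b : m <= n -> reach adj m a b -> reach adj n a b.
Proof.
elim: n => [|n IH]; first by rewrite leqn0 => /eqP->.
by rewrite leq_eqVlt ltnS => /predU1P[-> //|/IH r_m /r_m /= ->].
Qed.

Lemma reach1 a b : reach adj 1 a b = (a == b) || adj a b.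
Proof.
congr (_ || _); apply/existsP/idP => [[z /andP[/eqP <-]] //|ab].
by exists a; rewrite eqxx.
Qed.

Lemma card_ge_uniq (s : seq T) : uniq s -> size s <= #|T|.
Proof. by move=> us; rewrite -(card_uniqP us) max_card. Qed.

Lemma gdist_le n a b : n < #|T| -> reach adj n a b -> gdist adj a b <= n.
Proof.
move=> nT r_n; rewrite leqNgt; apply: contraTN r_n => lt_n.
by have := before_find 0 lt_n; rewrite nth_iota // add0n => ->.
Qed.

Lemma gdist_gt n a b : n < #|T| -> ~~ reach adj n a b -> n < gdist adj a b.
Proof.
move=> nT; rewrite ltnNge; apply: contra => le_n.
have has_r : has (fun k => reach adj k a b) (iota 0 #|T|).
  by rewrite has_find size_iota (leq_ltn_trans le_n nT).
move: (nth_find 0 has_r); rewrite nth_iota ?add0n; first exact: reach_mono.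
exact: leq_ltn_trans le_n nT.
Qed.

Lemma gdist_refl a : gdist adj a a = 0.
Proof. by apply/eqP; rewrite -leqn0 gdist_le //=; apply/card_gt0P; exists a. Qed.

Lemma gdist_adj_le1 a b : adj a b -> gdist adj a b <= 1.
Proof.
move=> ab; have [<-|nab] := eqVneq a b; first by rewrite gdist_refl.
by apply: gdist_le; rewrite ?reach1 ?ab ?orbT // (card_ge_uniq (s := [:: a; b])) //= inE nab.
Qed.

Lemma gdist_gt0 a b : a != b -> 0 < gdist adj a b.
Proof. by move=> nab; apply: gdist_gt => //; apply/card_gt0P; exists a. Qed.

Lemma gdist_gt1 a b : a != b -> ~~ adj a b -> 1 < gdist adj a b.
Proof.
move=> nab nadj; apply: gdist_gt; last by rewrite reach1 negb_or nab.
by rewrite (card_ge_uniq (s := [:: a; b])) //= inE nab.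
Qed.

Lemma gdist_gt2 a b : 2 < #|T| -> a != b -> ~~ adj a b ->
  (forall z, adj a z -> ~~ adj z b) -> 2 < gdist adj a b.
Proof.
move=> T3 nab nadj no_path; apply: gdist_gt => //.
change (~~ (reach adj 1 a b || [exists z, reach adj 1 a z && adj z b])).
rewrite reach1 !negb_or nab nadj !andTb.
apply/existsPn => z.
rewrite reach1 negb_and negb_or; case: eqP => [<-|_] //=.
by rewrite -implybE; apply/implyP/no_path.
Qed.

End Distance.

Local Open Scope ring_scope.

Section SumIndicator.
Variables (R : realType) (T : finType).
Implicit Types (A B : {set T}).

Lemma sum_eq_mul (t : T) (F : T -> R) : \sum_b (b == t)%:R * F b = F t.
Proof.
rewrite (bigD1 t) //= eqxx mul1r big1 ?addr0 // => b /negbTE->.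
by rewrite mul0r.
Qed.

Lemma sum_mem_card A B : \sum_(a in A) ((a \in B)%:R : R) = #|A :&: B|%:R.
Proof.
rewrite (eq_bigr (fun a => if a \in B then 1 else 0)); last by move=> a _; case: (a \in B).
rewrite -big_mkcondr sumr_const; congr (_%:R).
by apply: eq_card => a; rewrite !inE.
Qed.

Lemma sum_injective_eq A (s : T -> T) b : {in A &, injective s} ->
  \sum_a ((a \in A)%:R * (b == s a)%:R : R) = (b \in s @: A)%:R.
Proof.
move=> inj_s; have [/imsetP[a0 a0A ->]|nb] := boolP (b \in s @: A).
  rewrite (bigD1 a0) //= a0A eqxx mulr1 big1 ?addr0 // => a a_a0.
  case: (boolP (a \in A)) => aA; last by rewrite mul0r.
  by case: eqP => [/inj_s e|]; [rewrite e ?eqxx in a_a0 | rewrite mulr0].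
rewrite big1 // => a _; case: (boolP (a \in A)) => aA; last by rewrite mul0r.
by case: eqP => [bsa|]; [rewrite bsa imset_f in nb | rewrite mulr0].
Qed.

End SumIndicator.

Section Transport.
Variables (R : realType) (T : finType) (adj : rel T).
Implicit Types (f g : T -> R) (A : T -> T -> R).

Definition cost A : R := \sum_a \sum_b A a b * (gdist adj a b)%:R.

Lemma coupling_nonneg (m1 m2 : T -> R) A : (forall a b, 0 <= A a b) -> (forall a, m1 a <= 1) ->
  (forall a, \sum_b A a b = m1 a) -> (forall b, \sum_a A a b = m2 b) ->
  coupling m1 m2 A.
Proof.
move=> A_ge0 m1_le1 row col; split=> // a b; rewrite A_ge0 /=.
by apply: le_trans (m1_le1 a); rewrite -row (bigD1 b) //= lerDl sumr_ge0.
Qed.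

Lemma product_coupling (m1 m2 : T -> R) :
  (forall a, 0 <= m1 a <= 1) -> (forall b, 0 <= m2 b) ->
  \sum_a m1 a = 1 -> \sum_b m2 b = 1 -> coupling m1 m2 (fun a b => m1 a * m2 b).
Proof.
move=> m1_01 m2_ge0 sum_m1 sum_m2.
apply: coupling_nonneg => [a b|a|a|b].
- by rewrite mulr_ge0 //; case/andP: (m1_01 a).
- by case/andP: (m1_01 a).
- by rewrite -mulr_sumr sum_m2 mulr1.
- by rewrite -mulr_suml sum_m1 mul1r.
Qed.

Lemma coupling_ge0 (m1 m2 : T -> R) A a b : coupling m1 m2 A -> 0 <= A a b.
Proof. by case=> A01 _ _; case/andP: (A01 a b). Qed.

Lemma coupling_le_row (m1 m2 : T -> R) A a b : coupling m1 m2 A -> A a b <= m1 a.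
Proof.
move=> cA; case: (cA) => _ <- _.
by rewrite (bigD1 b) //= lerDl sumr_ge0 // => c _; apply: coupling_ge0 cA.
Qed.

Lemma coupling_le_col (m1 m2 : T -> R) A a b : coupling m1 m2 A -> A a b <= m2 b.
Proof.
move=> cA; case: (cA) => _ _ <-.
by rewrite (bigD1 a) //= lerDl sumr_ge0 // => c _; apply: coupling_ge0 cA.
Qed.

Lemma transport_le_cost (m1 m2 : T -> R) A : coupling m1 m2 A -> transport adj m1 m2 <= cost A.
Proof.
move=> cA; apply: ge_inf; last by exists A.
exists 0 => _ [B [cB ->]]; apply: sumr_ge0 => a _; apply: sumr_ge0 => b _.
by rewrite mulr_ge0 // (coupling_ge0 _ _ cB).
Qed.

Lemma cost_le_offdiag A : (forall a b, 0 <= A a b) ->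
  (forall a b, A a b != 0 -> (a == b) || adj a b) ->
  cost A <= \sum_a \sum_b A a b - \sum_a A a a.
Proof.
move=> A_ge0 A_supp; rewrite -sumrB; apply: ler_sum => a _.
rewrite (bigD1 a) //= gdist_refl mulr0 add0r [X in _ <= X - _](bigD1 a) //= addrC addrK.
apply: ler_sum => b _; have [->|Anz] := eqVneq (A a b) 0; first by rewrite mul0r.
rewrite ler_piMr // lern1; have [<-|nab] := eqVneq a b; first by rewrite gdist_refl.
by apply: gdist_adj_le1; move: (A_supp a b Anz); rewrite (negbTE nab).
Qed.

Lemma transport_ge_dual (m1 m2 : T -> R) f g : (exists A, coupling m1 m2 A) ->
  (forall a b, m1 a != 0 -> m2 b != 0 -> f a - g b <= (gdist adj a b)%:R) ->
  \sum_a f a * m1 a - \sum_b g b * m2 b <= transport adj m1 m2.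
Proof.
move=> [A0 cA0] gap; apply: lb_le_inf; first by exists (cost A0), A0.
move=> _ [A [cA ->]]; case: (cA) => _ row col.
have -> : \sum_a f a * m1 a - \sum_b g b * m2 b = \sum_a \sum_b A a b * (f a - g b).
  under [RHS]eq_bigr do rewrite (eq_bigr _ (fun b _ => mulrBr _ _ _)) sumrB.
  rewrite sumrB; congr (_ - _).
    by apply: eq_bigr => a _; rewrite -mulr_suml row mulrC.
  by rewrite exchange_big; apply: eq_bigr => b _; rewrite -mulr_suml col mulrC.
apply: ler_sum => a _; apply: ler_sum => b _.
have [->|Anz] := eqVneq (A a b) 0; first by rewrite !mul0r.
have Apos : 0 < A a b by rewrite lt_def Anz (coupling_ge0 _ _ cA).
rewrite ler_pM2l // gap // gt_eqF //; apply: lt_le_trans Apos _.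
  exact: coupling_le_row cA.
exact: coupling_le_col cA.
Qed.

End Transport.

Section LazyWalk.
Variables (R : realType) (T : finType) (adj : rel T) (alpha : R).
Hypothesis adj_irr : irreflexive adj.

Lemma lazy_walk_expect (h : T -> R) z : \sum_a h a * lazy_walk adj alpha z a =
  alpha * h z + (1 - alpha) / (deg adj z)%:R * \sum_(a in nbhd adj z) h a.
Proof.
rewrite (bigD1 z) //= /lazy_walk eqxx mulrC; congr (_ + _).
rewrite mulr_sumr big_mkcond [RHS]big_mkcond /=; apply: eq_bigr => a _; rewrite inE.
case: eqVneq => [->|_]; first by rewrite adj_irr.
by case: (adj z a); rewrite ?mulr0 // mulrC.
Qed.

Lemma lazy_walk_support z a : lazy_walk adj alpha z a != 0 -> (a == z) || adj z a.
Proof.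
by rewrite /lazy_walk; case: (eqVneq a z) => //= _; case: (adj z a); rewrite ?eqxx.
Qed.

Hypothesis alpha01 : 0 <= alpha <= 1.

Lemma lazy_walk_ge0 z a : 0 <= lazy_walk adj alpha z a.
Proof.
case/andP: alpha01 => ge0 le1; rewrite /lazy_walk; case: eqP => // _.
by case: (adj z a) => //; rewrite divr_ge0 ?subr_ge0.
Qed.

Lemma lazy_walk_le1 z a : lazy_walk adj alpha z a <= 1.
Proof.
case/andP: alpha01 => ge0 le1; rewrite /lazy_walk; case: eqP => // _.
case: (adj z a) => //; case: (deg adj z) => [|n]; first by rewrite invr0 mulr0.
have n1 : (1 : R) <= n.+1%:R by rewrite ler1n.
by rewrite ler_pdivrMr // mul1r; lra.
Qed.

Lemma lazy_walk_sum1 z : (0 < deg adj z)%N -> \sum_a lazy_walk adj alpha z a = 1.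
Proof.
move=> deg_gt0; under eq_bigr do rewrite -[lazy_walk _ _ _ _]mul1r.
rewrite lazy_walk_expect sumr_const mulr1 mulfVK ?pnatr_eq0 -?lt0n //.
by rewrite addrC subrK.
Qed.

Lemma lazy_walk_coupling x y : (0 < deg adj x)%N -> (0 < deg adj y)%N ->
  exists A, coupling (lazy_walk adj alpha x) (lazy_walk adj alpha y) A.
Proof.
move=> x_gt0 y_gt0; eexists; apply: product_coupling.
- by move=> a; rewrite lazy_walk_ge0 lazy_walk_le1.
- exact: lazy_walk_ge0.
- exact: lazy_walk_sum1.
- exact: lazy_walk_sum1.
Qed.

End LazyWalk.

Definition side (T : finType) (adj : rel T) (x y : T) : {set T} := nbhd adj x :\ y.

Section EdgeNeighbourhoods.
Variables (R : realType) (T : finType) (adj : rel T) (d : nat).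
Hypotheses (adj_sym : symmetric adj) (adj_irr : irreflexive adj) (reg : regular adj d).

Lemma adj_neq a b : adj a b -> a != b.
Proof. by apply: contraTneq => ->; rewrite adj_irr. Qed.

Lemma mem_side x y u : (u \in side adj x y) = (u != y) && adj x u.
Proof. by rewrite !inE. Qed.

Lemma deg_gt0 x y : adj x y -> (0 < deg adj x)%N.
Proof. by move=> xy; apply/card_gt0P; exists y; rewrite inE. Qed.

Lemma card_side x y : adj x y -> #|side adj x y| = d.-1.
Proof. by move=> xy; rewrite -(reg x) /deg (cardsD1 y (nbhd adj x)) inE xy. Qed.

Lemma d_gt0 x y : adj x y -> (0 < d)%N.
Proof. by move=> xy; rewrite -(reg x) (deg_gt0 xy). Qed.

Lemma lazy_mass_ge0 alpha : alpha <= 1 -> 0 <= (1 - alpha) / d%:R :> R.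
Proof. by move=> alpha_le1; rewrite divr_ge0 ?subr_ge0. Qed.

Hypothesis noC3 : ~ has_C3 adj.

Lemma no_common_nbr x y z : adj x y -> adj x z -> adj y z -> False.
Proof.
move=> xy xz yz; apply: noC3; exists x, y, z; split=> //; last by rewrite adj_sym.
by rewrite /= !inE negb_or (adj_neq xy) (adj_neq xz) (adj_neq yz).
Qed.

Lemma side_nadj x y u : adj x y -> u \in side adj x y -> ~~ adj y u.
Proof. by move=> xy; rewrite mem_side => /andP[_ xu]; apply/negP; apply: no_common_nbr xy xu. Qed.

Lemma side_disjoint x y u v : adj x y ->
  u \in side adj x y -> v \in side adj y x -> u != v.
Proof.
move=> xy uX; rewrite mem_side => /andP[_ yv].
by apply: contraTneq yv => <-; apply: side_nadj uX.
Qed.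

Hypothesis noC5 : ~ has_C5 adj.

Lemma side_gdist_gt2 x y u v : adj x y ->
  u \in side adj x y -> v \in side adj y x -> ~~ adj u v -> (2 < gdist adj u v)%N.
Proof.
move=> xy uX vY nuv; have uv := side_disjoint xy uX vY.
move: uX vY; rewrite !mem_side => /andP[uy xu] /andP[vx yv].
have T3 : (2 < #|T|)%N.
  apply: (card_ge_uniq (s := [:: u; v; x])).
  by rewrite /= !inE negb_or uv vx eq_sym (adj_neq xu).
apply: gdist_gt2 => // z uz; apply/negP => zv.
have zx : z != x.
  by apply: contraTneq zv => ->; apply/negP => xv; apply: no_common_nbr xy xv yv.
have zy : z != y.
  by apply: contraTneq uz => ->; apply/negP => u_y; apply: no_common_nbr xy xu _; rewrite adj_sym.
apply: noC5; exists x, u, z, v, y; split; last by split=> //; rewrite adj_sym.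
rewrite /= !inE !negb_or (eq_sym x z) (eq_sym x v) (eq_sym v y) zx vx uv uy zy.
by rewrite (adj_neq xu) (adj_neq xy) (adj_neq uz) (adj_neq zv) (adj_neq yv).
Qed.

Section LowerBound.
Variables (x y : T) (S : {set T}) (alpha : R).
Hypotheses (xy : adj x y) (S_sub : S \subset side adj x y) (alpha01 : 0 <= alpha <= 1).

Local Notation X := (side adj x y).
Local Notation Y := (side adj y x).
Local Notation N := (nbhd_in adj Y S).

Definition pot_x (a : T) : R := (a == x)%:R + 2 * (a \in S)%:R.
Definition pot_y (b : T) : R := (b == x)%:R + (b \in N)%:R - (b \in Y :\: N)%:R.

Lemma x_notin_S : x \notin S.
Proof. by apply/negP => /(subsetP S_sub); rewrite mem_side adj_irr andbF. Qed.

Lemma pot_y_y : pot_y y = 0.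
Proof.
have yY : y \notin Y by rewrite mem_side adj_irr andbF.
have yN : y \notin N by apply: contra yY; apply/subsetP/nbhd_in_sub.
by rewrite /pot_y in_setD (eq_sym y x) (negbTE (adj_neq xy)) (negbTE yN) (negbTE yY) andbF subr0 addr0.
Qed.

Lemma pot_y_cases b : (b == y) || adj y b ->
  [\/ b = y /\ pot_y b = 0, b = x /\ pot_y b = 1, b \in N /\ pot_y b = 1
    | [/\ b \in Y, b \notin N & pot_y b = -1]].
Proof.
case: (eqVneq b y) => [->|b_y] /= => [_|yb]; first by constructor 1; rewrite pot_y_y.
have xY : x \notin Y by rewrite mem_side eqxx.
have [->|b_x] := eqVneq b x.
  have xN : x \notin N by apply: contra xY; apply/subsetP/nbhd_in_sub.
  constructor 2; split=> //.
  by rewrite /pot_y in_setD eqxx (negbTE xN) (negbTE xY) andbF subr0 addr0.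
have bY : b \in Y by rewrite mem_side b_x.
have [bN|bN] := boolP (b \in N); [constructor 3 | constructor 4]; split=> //.
  by rewrite /pot_y in_setD (negbTE b_x) bN /= subr0 add0r.
by rewrite /pot_y in_setD (negbTE b_x) (negbTE bN) bY /= add0r sub0r.
Qed.

Lemma pot_gap a b : (a == x) || adj x a -> (b == y) || adj y b ->
  pot_x a - pot_y b <= (gdist adj a b)%:R.
Proof.
move=> a_supp /pot_y_cases b_cases.
have gdist_ge k u v : (k <= gdist adj u v)%N -> k%:R <= (gdist adj u v)%:R :> R.
  by rewrite ler_nat.
have x_Y v : v \in Y -> ~~ adj x v by apply: side_nadj; rewrite adj_sym.
have [-> {a_supp}|a_x] := eqVneq a x.
  have -> : pot_x x = 1 by rewrite /pot_x eqxx (negbTE x_notin_S) mulr0 addr0.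
  case: b_cases => [[-> ->]|[-> ->]|[_ ->]|[bY _ ->]].
  - by have := gdist_ge 1%N _ _ (gdist_gt0 adj (adj_neq xy)); lra.
  - by apply: le_trans (ler0n _ _); lra.
  - by apply: le_trans (ler0n _ _); lra.
  - have x_b : x != b by apply: contraTneq bY => ->; rewrite mem_side eqxx.
    by have := gdist_ge 2%N _ _ (gdist_gt1 x_b (x_Y b bY)); lra.
have xa : adj x a by rewrite (negbTE a_x) in a_supp.
have a_Y v : v \in Y -> a != v by move=> vY; apply: contraTneq xa => ->; apply: x_Y.
have [aS|aS] := boolP (a \in S); last first.
  have -> : pot_x a = 0 by rewrite /pot_x (negbTE a_x) (negbTE aS) mulr0 addr0.
  case: b_cases => [[_ ->]|[_ ->]|[_ ->]|[bY _ ->]].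
  - by rewrite subrr.
  - by apply: le_trans (ler0n _ _); lra.
  - by apply: le_trans (ler0n _ _); lra.
  - by have := gdist_ge 1%N _ _ (gdist_gt0 adj (a_Y b bY)); lra.
have -> : pot_x a = 2 by rewrite /pot_x (negbTE a_x) aS add0r mulr1.
have aX := subsetP S_sub a aS.
case: b_cases => [[-> ->]|[-> ->]|[bN ->]|[bY bN ->]].
- have a_y : a != y by move: aX; rewrite mem_side => /andP[].
  have nay : ~~ adj a y by rewrite adj_sym (side_nadj xy aX).
  by have := gdist_ge 2%N _ _ (gdist_gt1 a_y nay); lra.
- by have := gdist_ge 1%N _ _ (gdist_gt0 adj a_x); lra.
- have bY := subsetP (nbhd_in_sub _ _ _) b bN.
  by have := gdist_ge 1%N _ _ (gdist_gt0 adj (a_Y b bY)); lra.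
- have nab : ~~ adj a b by apply: contra bN; apply: mem_nbhd_in aS bY.
  by have := gdist_ge 3%N _ _ (side_gdist_gt2 xy aX bY nab); lra.
Qed.

Lemma expect_pot_x : \sum_a pot_x a * lazy_walk adj alpha x a =
  alpha + (1 - alpha) / d%:R * (2 * #|S|%:R).
Proof.
rewrite lazy_walk_expect // reg; congr (_ + _ * _).
  by rewrite /pot_x eqxx (negbTE x_notin_S) mulr0 addr0 mulr1.
rewrite big_split /= big1 => [|a]; last by rewrite inE eq_sym => /adj_neq/negbTE->.
rewrite add0r -mulr_sumr sum_mem_card (setIidPr _) //.
by apply: subset_trans S_sub (subsetDl _ _).
Qed.

Lemma expect_pot_y : \sum_b pot_y b * lazy_walk adj alpha y b =
  (1 - alpha) / d%:R * (1 + #|N|%:R - #|Y :\: N|%:R).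
Proof.
rewrite lazy_walk_expect // reg pot_y_y mulr0 add0r; congr (_ * _).
have YnY : Y \subset nbhd adj y := subsetDl _ _.
rewrite sumrB big_split /=.
have -> : \sum_(b in nbhd adj y) ((b == x)%:R : R) = 1.
  rewrite (bigD1 x) ?inE 1?adj_sym //= eqxx big1 ?addr0 // => b /andP[_].
  by move/negbTE->.
rewrite !sum_mem_card (setIidPr (subset_trans (nbhd_in_sub _ _ _) YnY)).
by rewrite (setIidPr (subset_trans (subsetDl _ _) YnY)).
Qed.

Lemma lazy_transport_ge :
  alpha + (1 - alpha) / d%:R * (d%:R - 2 + 2 * (#|S|%:R - #|N|%:R))
  <= transport adj (lazy_walk adj alpha x) (lazy_walk adj alpha y).
Proof.
have yx : adj y x by rewrite adj_sym.
have card_Y : (#|N| + #|Y :\: N|)%N = d.-1.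
  by rewrite -{1}(setIidPr (nbhd_in_sub adj Y S)) cardsID card_side.
have card_d : d%:R = 1 + #|N|%:R + #|Y :\: N|%:R :> R.
  by rewrite -addrA -natrD card_Y addrC natr1 prednK // (d_gt0 xy).
have -> : alpha + (1 - alpha) / d%:R * (d%:R - 2 + 2 * (#|S|%:R - #|N|%:R))
    = \sum_a pot_x a * lazy_walk adj alpha x a - \sum_b pot_y b * lazy_walk adj alpha y b.
  by rewrite expect_pot_x expect_pot_y; set p := _ / _; rewrite card_d; ring.
apply: transport_ge_dual; first exact: lazy_walk_coupling (deg_gt0 xy) (deg_gt0 yx).
by move=> a b /lazy_walk_support ? /lazy_walk_support ?; apply: pot_gap.
Qed.

End LowerBound.

Section UpperBound.
Variables (x y : T) (s : T -> T) (alpha : R).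
Hypotheses (xy : adj x y) (s_match : matching adj (side adj x y) (side adj y x) s).
Hypotheses (alpha01 : 0 <= alpha <= 1) (p_le_alpha : (1 - alpha) / d%:R <= alpha).

Local Notation X := (side adj x y).
Local Notation Y := (side adj y x).
Local Notation p := ((1 - alpha) / d%:R).

Definition matching_plan (a b : T) : R :=
  (a == x)%:R * ((b == x)%:R * p + (b == y)%:R * (alpha - p))
  + (a == y)%:R * ((b == y)%:R * p) + (a \in X)%:R * ((b == s a)%:R * p).

Lemma matching_plan_ge0 a b : 0 <= matching_plan a b.
Proof.
have p0 : 0 <= p by case/andP: alpha01 => _; apply: lazy_mass_ge0.
have q0 : 0 <= alpha - p by rewrite subr_ge0.
have ind_ge0 (c : bool) r : 0 <= r -> 0 <= c%:R * r by apply: mulr_ge0.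
by rewrite /matching_plan !addr_ge0 ?ind_ge0 ?addr_ge0 ?ind_ge0.
Qed.

Lemma matching_plan_row a : \sum_b matching_plan a b = lazy_walk adj alpha x a.
Proof.
rewrite !big_split /= -!mulr_sumr big_split /= !sum_eq_mul [p + _]addrC subrK /lazy_walk reg.
have [->|a_x] := eqVneq a x.
  by rewrite (negbTE (adj_neq xy)) mem_side adj_irr andbF !mul0r !addr0 mul1r.
rewrite mem_side mul0r add0r; have [->|a_y] := eqVneq a y.
  by rewrite xy mul1r mul0r addr0.
by rewrite mul0r add0r; case: (adj x a); rewrite ?mul1r ?mul0r.
Qed.

Lemma matching_plan_col b : \sum_a matching_plan a b = lazy_walk adj alpha y b.
Proof.
have yx : adj y x by rewrite adj_sym.
have imset_s : s @: X = Y.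
  by apply: matching_imset s_match _; rewrite !card_side.
rewrite !big_split /= !sum_eq_mul; under eq_bigr do rewrite mulrA.
rewrite -mulr_suml sum_injective_eq ?imset_s; last by case: s_match.
rewrite /lazy_walk reg mem_side; have [->|b_y] := eqVneq b y.
  by rewrite eq_sym (negbTE (adj_neq xy)) adj_irr andbF !mul0r add0r addr0 !mul1r subrK.
rewrite !mul0r !addr0; have [->|b_x] := eqVneq b x.
  by rewrite yx /= mulr1n mul1r mul0r addr0.
by rewrite mul0r add0r; case: (adj y b); rewrite /= ?mulr1n ?mul1r ?mul0r.
Qed.

Lemma matching_plan_coupling :
  coupling (lazy_walk adj alpha x) (lazy_walk adj alpha y) matching_plan.
Proof.
apply: coupling_nonneg; [exact: matching_plan_ge0 | | exact: matching_plan_row | exact: matching_plan_col].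
by move=> a; apply: lazy_walk_le1.
Qed.

Lemma matching_plan_supp a b : matching_plan a b != 0 -> (a == b) || adj a b.
Proof.
apply: contraR => /norP[a_b nab].
have ind_mul0 (c1 c2 : bool) r : ~~ (c1 && c2) -> c1%:R * (c2%:R * r) = 0 :> R.
  by case: c1; case: c2; rewrite ?mul0r ?mulr0.
rewrite /matching_plan mulrDr !ind_mul0 ?addr0 //.
- by apply: contra nab => /andP[aX /eqP->]; case: s_match => _ /(_ a aX)[].
- by apply: contra a_b => /andP[/eqP-> /eqP->].
- by apply: contra nab => /andP[/eqP-> /eqP->].
- by apply: contra a_b => /andP[/eqP-> /eqP->].
Qed.

Lemma matching_plan_cost : cost adj matching_plan <= 1 - 2 * p.
Proof.
apply: le_trans (cost_le_offdiag matching_plan_ge0 matching_plan_supp) _.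
have -> : \sum_a \sum_b matching_plan a b = 1.
  under eq_bigr do rewrite matching_plan_row.
  exact: lazy_walk_sum1 (deg_gt0 xy).
have plan_xx : matching_plan x x = p.
  by rewrite /matching_plan eqxx (negbTE (adj_neq xy)) mem_side adj_irr andbF /= !mul0r !addr0 mulr1n !mul1r.
have plan_yy : matching_plan y y = p.
  by rewrite /matching_plan eqxx eq_sym (negbTE (adj_neq xy)) mem_side eqxx /= !mul0r !mul1r add0r addr0.
rewrite lerD2l lerN2 (bigD1 x) // (bigD1 y) 1?eq_sym ?(adj_neq xy) //= plan_xx plan_yy.
by rewrite mulr_natl mulr2n lerD2l lerDl sumr_ge0 // => a _; apply: matching_plan_ge0.
Qed.

Lemma lazy_transport_le :
  transport adj (lazy_walk adj alpha x) (lazy_walk adj alpha y) <= alpha + p * (d%:R - 2).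
Proof.
have d_neq0 : d%:R != 0 :> R by rewrite pnatr_eq0 -lt0n (d_gt0 xy).
have -> : alpha + p * (d%:R - 2) = 1 - 2 * p by rewrite mulrBr mulfVK //; ring.
apply: le_trans (transport_le_cost _ matching_plan_coupling) _.
exact: matching_plan_cost.
Qed.

End UpperBound.

Section LazyCurvature.
Variables (x y : T) (alpha : R).
Hypothesis xy : adj x y.

Local Notation W := (transport adj (lazy_walk adj alpha x) (lazy_walk adj alpha y)).

Lemma kappa_edge : kappa adj alpha x y = 1 - W.
Proof.
have dist1 : gdist adj x y = 1%N.
  by apply/eqP; rewrite eqn_leq gdist_adj_le1 // gdist_gt0 // adj_neq.
by rewrite /kappa dist1 divr1.
Qed.

Lemma kappa_le0_hall_defect (S : {set T}) : 0 <= alpha <= 1 ->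
  S \subset side adj x y -> (#|nbhd_in adj (side adj y x) S| < #|S|)%N ->
  kappa adj alpha x y <= 0.
Proof.
move=> alpha01 S_sub defect; rewrite kappa_edge subr_le0.
apply: le_trans (lazy_transport_ge xy S_sub alpha01).
have defectR : #|nbhd_in adj (side adj y x) S|%:R + 1 <= #|S|%:R :> R.
  by rewrite natr1 ler_nat.
have p_ge0 : 0 <= (1 - alpha) / d%:R by case/andP: alpha01 => _; apply: lazy_mass_ge0.
have pd : (1 - alpha) / d%:R * d%:R = 1 - alpha by rewrite mulfVK // pnatr_eq0 -lt0n (d_gt0 xy).
have : (1 - alpha) / d%:R * d%:R <= (1 - alpha) / d%:R *
    (d%:R - 2 + 2 * (#|S|%:R - #|nbhd_in adj (side adj y x) S|%:R)).
  by apply: ler_wpM2l => //; lra.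
lra.
Qed.

Lemma kappa_matching (s : T -> T) : 1 / 2 <= alpha < 1 ->
  matching adj (side adj x y) (side adj y x) s ->
  kappa adj alpha x y = (1 - alpha) * (2 / d%:R).
Proof.
move=> /andP[half lt1] s_match.
have alpha01 : 0 <= alpha <= 1 by apply/andP; split; lra.
have d_ge1 : 1 <= d%:R :> R by rewrite ler1n (d_gt0 xy).
have p_le_alpha : (1 - alpha) / d%:R <= alpha.
  by rewrite ler_pdivrMr ?(lt_le_trans ltr01) //; nra.
have W_ge := lazy_transport_ge xy (sub0set (side adj x y)) alpha01.
rewrite nbhd_in0 !cards0 subrr mulr0 addr0 in W_ge.
have W_le := lazy_transport_le xy s_match alpha01 p_le_alpha.
have d_neq0 : d%:R != 0 :> R by rewrite pnatr_eq0 -lt0n (d_gt0 xy).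
rewrite kappa_edge (_ : W = alpha + (1 - alpha) / d%:R * (d%:R - 2)); first by field.
by apply/le_anti; rewrite W_le W_ge.
Qed.

End LazyCurvature.

End EdgeNeighbourhoods.

Section LeftLimit.
Local Open Scope classical_set_scope.
Variables (R : realType) (a : R) (f : R -> R).

(* Without a limit, [lim] returns the default point [0] of [R]. *)
Lemma lim_at_left_le0 : (\forall t \near a^'-, f t <= 0) -> lim (f @ a^'-) <= 0.
Proof.
move=> f_le0; have [f_cvg|f_ncvg] := pselect (cvg (f @ a^'-)); first exact: limr_le.
by rewrite [lim _]getPN // => l fl; apply: f_ncvg; apply: cvgP fl.
Qed.

End LeftLimit.

Theorem proposition2p4 (R : realType) (T : finType) (adj : rel T) (d : nat) :
  simple_graph adj -> connected_graph adj -> regular adj d ->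
  ~ has_C3 adj -> ~ has_C5 adj ->
  (forall x y : T, adj x y -> 0 < kappaLLY R adj x y) ->
  forall x y : T, adj x y -> kappaLLY R adj x y = 2 / d%:R.
Proof.
move=> [adj_sym adj_nirr] _ reg noC3 noC5 kappa_pos x y xy.
have adj_irr : irreflexive adj := fun a => negbTE (adj_nirr a).
have [/existsP[S /andP[S_sub defect]]|/existsPn hall] := boolP [exists S : {set T},
    (S \subset side adj x y) && (#|nbhd_in adj (side adj y x) S| < #|S|)%N].
  suff : kappaLLY R adj x y <= 0 by rewrite leNgt kappa_pos.
  apply: lim_at_left_le0; near=> t.
  have t_gt0 : 0 < t by near: t; exact: nbhs_left_gt.
  have t_lt1 : t < 1 by near: t; exact: nbhs_left_lt.
  rewrite pmulr_lle0 ?invr_gt0 ?subr_gt0 //.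
  by apply: kappa_le0_hall_defect S_sub defect => //; rewrite (ltW t_gt0) (ltW t_lt1).
have [s s_match] : exists s, matching adj (side adj x y) (side adj y x) s.
  by apply: hall_marriage => S S_sub; move: (hall S); rewrite S_sub ltnNge negbK.
apply: lim_near_cst; first exact: norm_hausdorff.
near=> t.
have t_gt : 1 / 2 < t by near: t; apply: nbhs_left_gt; lra.
have t_lt1 : t < 1 by near: t; exact: nbhs_left_lt.
rewrite (kappa_matching adj_sym adj_irr reg noC3 noC5 xy _ s_match) ?(ltW t_gt) //.
by rewrite mulrAC divff ?mul1r // subr_eq0 gt_eqF.
Unshelve. all: by end_near.
Qed.
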